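(* Let $A=(a_{pq})$ be an $m\times m$ coloring matrix. Suppose $I,J\subseteq\{1,\dots,m\}$ are disjoint sets with $|I|=|J|$ such that $\sum_{i\in I}t_A^{(i)}(n)=\sum_{j\in J}t_A^{(j)}(n)$ for all $n$, and that $\ell\in\{1,\dots,m\}$ is a color (possibly in $I$ or $J$) with $a_{\ell i}=0$ for all $i\in I$ and $a_{\ell j}=1$ for all $j\in J$. Let $B=(b_{pq})$ be the $m\times m$ coloring matrix defined by $b_{pq}=1$ if $p=\ell$ and $q\in I$, $b_{pq}=0$ if $p=\ell$ and $q\in J$, and $b_{pq}=a_{pq}$ otherwise. Then $A$ and $B$ are strictly tree coloring equivalent. Furthermore, for all $n\ge1$, $$\sum_{i\in I}t^{(i)}_A(n)=\sum_{j\in J}t^{(j)}_A(n)=\sum_{i\in I}t^{(i)}_{B}(n)=\sum_{j\in J}t^{(j)}_{B}(n).$$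
   Context: A plane tree is an unlabeled rooted tree in which the children of every vertex are linearly ordered. A coloring matrix is an $m\times m$ matrix $A=(a_{ij})$ with entries in $\{0,1\}$. An $A$-coloring of a plane tree assigns to each vertex a color in $\{1,\dots,m\}$ such that whenever a vertex of color $j$ is a child of a vertex of color $i$, $a_{ij}=1$. Let $t_A^{(i)}(n)$ be the number of pairs (plane tree with $n$ vertices, $A$-coloring of it) in which the root has color $i$. Two $m\times m$ coloring matrices $A,B$ are strictly tree coloring equivalent if $t_A^{(i)}(n)=t_B^{(i)}(n)$ for all $n\ge1$ and all $1\le i\le m$. *)

From mathcomp Require Import all_boot all_algebra.
From Stdlib Require Import ClassicalEpsilon.
Set Implicit Arguments. Unset Strict Implicit. Unset Printing Implicit Defensive.

(* A coloring matrix: an m x m matrix with entries in {0,1}, encoded as bool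
   (true = 1, false = 0).  Colors {1,..,m} are encoded as 'I_m. *)

(* A pair (plane tree, coloring of its vertices) is the same thing as a plane
   tree each of whose vertices carries a color: a vertex with color c and the
   ordered list of its (colored) child subtrees. *)
Inductive ctree (m : nat) : Type :=
  CNode of 'I_m & seq (ctree m).

Definition root_color m (t : ctree m) : 'I_m := let: CNode c _ := t in c.

Fixpoint csize m (t : ctree m) : nat :=
  let: CNode _ ts := t in (foldr (fun u acc => csize u + acc) 1 ts).

Fixpoint Acolored m (A : 'M[bool]_m) (t : ctree m) : bool :=
  let: CNode c ts := t in
  foldr (fun u acc => [&& A c (root_color u), Acolored A u & acc]) true ts.

Definition has_card (T : Type) (P : T -> Prop) (k : nat) : Prop :=
  exists f : 'I_k -> T, injective f /\ (forall x, P x <-> exists i, f i = x).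

Definition tA m (A : 'M[bool]_m) (i : 'I_m) (n : nat) : nat :=
  epsilon (inhabits 0%N)
    (fun k => has_card (fun t : ctree m =>
                 [/\ csize t = n, root_color t = i & Acolored A t]) k).

Definition strictly_tree_coloring_equivalent m (A B : 'M[bool]_m) : Prop :=
  forall n, (1 <= n)%N -> forall i : 'I_m, tA A i n = tA B i n.

Definition switch_mx m (A : 'M[bool]_m) (I J : {set 'I_m}) (l : 'I_m)
  : 'M[bool]_m :=
  \matrix_(p, q) if p == l then
                   (if q \in I then true else if q \in J then false else A p q)
                 else A p q.

From mathcomp Require Import all_boot all_algebra zify.
From HB Require Import structures.
From Stdlib Require Import ClassicalEpsilon.
From Stdlib Require List.
Set Implicit Arguments. Unset Strict Implicit. Unset Printing Implicit Defensive.

(* Deleting the root of an A-colored tree with root color r leaves a sequence of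
   A-colored trees whose roots have colors j with A r j = 1.  Splitting off the
   first tree of such a forest shows that the number f_A(r, n) of these forests
   with n vertices satisfies f_A(r, 0) = 1 and
     f_A(r, n+1) = sum_(k <= n) (sum_(j | A r j) f_A(j, k)) * f_A(r, n - k),
   while t_A^(r)(n+1) = f_A(r, n).  So A enters only through the row sums
   sum_(j | A r j) f_A(j, k), and by induction on n two matrices with the same
   row sums have the same counts.  Passing from A to B only changes row l, where
   the colors of J are traded for those of I, which keeps the row sum because
   sum_I t_A = sum_J t_A. *)

Section CtreeCountType.
Variable m : nat.

(* The generated [ctree_ind] gives no induction hypothesis for the subtrees. *)
Definition ctree_forall_ind (P : ctree m -> Prop)
    (IH : forall c ts, List.Forall P ts -> P (CNode c ts)) : forall t, P t :=
  fix F t := let: CNode c ts := t in IH c ts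
    ((fix G ts : List.Forall P ts :=
        if ts is u :: us then List.Forall_cons u (F u) (G us) else List.Forall_nil P)
     ts).

Fixpoint gtree_of_ctree (t : ctree m) : GenTree.tree 'I_m :=
  let: CNode c ts := t in GenTree.Node 0 (GenTree.Leaf c :: map gtree_of_ctree ts).

Fixpoint ctree_of_gtree (g : GenTree.tree 'I_m) : option (ctree m) :=
  if g is GenTree.Node _ (GenTree.Leaf c :: gs)
  then Some (CNode c (pmap ctree_of_gtree gs)) else None.

Lemma gtree_of_ctreeK : pcancel gtree_of_ctree ctree_of_gtree.
Proof.
elim/ctree_forall_ind => c ts IH /=; congr (Some (CNode c _)).
by elim: IH => //= u us -> _ ->.
Qed.

HB.instance Definition _ := Countable.copy (ctree m) (pcan_type gtree_of_ctreeK).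

End CtreeCountType.

Lemma has_card_unique (T : eqType) (P : T -> Prop) k1 k2 :
  has_card P k1 -> has_card P k2 -> k1 = k2.
Proof.
move=> [f1 [inj1 P1]] [f2 [inj2 P2]].
have codom_uniq k (f : 'I_k -> T) : injective f -> uniq (codom f).
  by move=> inj_f; rewrite codomE map_inj_uniq ?enum_uniq.
rewrite -[k1]card_ord -[k2]card_ord -(size_codom f1) -(size_codom f2).
apply/perm_size/uniq_perm; rewrite ?codom_uniq // => x.
apply/codomP/codomP => -[i ->].
  have /P2[j <-] : P (f1 i) by apply/P1; exists i.
  by exists j.
have /P1[j <-] : P (f2 i) by apply/P2; exists i.
by exists j.
Qed.

Lemma has_card_seq (T : eqType) (P : T -> Prop) (s : seq T) :
  uniq s -> (forall x, P x <-> x \in s) -> has_card P (size s).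
Proof.
move=> uniq_s Ps; exists (tnth (in_tuple s)); split; first exact/tuple_uniqP.
move=> x; rewrite Ps; split; first by case/(tnthP (in_tuple s)) => i ->; exists i.
by case=> i <-; apply/(tnthP (in_tuple s)); exists i.
Qed.

Lemma flatten_map_uniq (S T : eqType) (F : S -> seq T) (key : T -> option S) s :
  uniq s -> {in s, forall x, uniq (F x)} ->
  {in s, forall x, {in F x, forall z, key z = Some x}} ->
  uniq (flatten (map F s)).
Proof.
elim: s => //= x s IHs /andP[x_notin_s uniq_s] uniqF keyF.
rewrite cat_uniq uniqF ?mem_head // IHs //; last 2 first.
- by move=> y ys; apply: uniqF; rewrite inE ys orbT.
- by move=> y ys; apply: keyF; rewrite inE ys orbT.
rewrite andbT; apply/hasPn => z /flatten_mapP[y ys zy]; apply: contra x_notin_s => zx.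
have [-> //] : Some x = Some y.
by rewrite -(keyF x _ z) ?mem_head // (keyF y _ z) // inE ys orbT.
Qed.

Definition forest_size m (ts : seq (ctree m)) := sumn (map (@csize m) ts).

Lemma forest_size_cons m (t : ctree m) ts :
  forest_size (t :: ts) = csize t + forest_size ts.
Proof. by []. Qed.

Lemma csize_CNode m c (ts : seq (ctree m)) : csize (CNode c ts) = (forest_size ts).+1.
Proof. by elim: ts => //= u ts ->; rewrite addnS. Qed.

Section Forests.
Variables (m : nat) (A : 'M[bool]_m).

Definition Aforest (r : 'I_m) (n : nat) (ts : seq (ctree m)) : bool :=
  all (fun t => A r (root_color t) && Acolored A t) ts && (forest_size ts == n).

Lemma Acolored_CNode c ts : Acolored A (CNode c ts) = Aforest c (forest_size ts) ts.
Proof. by rewrite /Aforest eqxx andbT; elim: ts => //= u ts ->; rewrite andbA. Qed.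

Lemma Aforest_size r n ts : Aforest r n ts -> forest_size ts = n.
Proof. by case/andP=> _ /eqP. Qed.

Lemma Aforest0 r ts : Aforest r 0 ts = (ts == [::]).
Proof.
by case: ts => [|[c f] ts]; rewrite /Aforest // forest_size_cons csize_CNode addSn andbF.
Qed.

Lemma Aforest_cons r n j f ts :
  Aforest r n.+1 (CNode j f :: ts) =
  [&& A r j, Aforest j (forest_size f) f, forest_size f <= n
    & Aforest r (n - forest_size f) ts].
Proof.
rewrite -Acolored_CNode /Aforest forest_size_cons csize_CNode /= -!andbA.
do 2 congr (_ && _); rewrite andbCA; congr (_ && _).
by apply/eqP/andP => [|[/eqP ? /eqP ?]]; lia.
Qed.

(* [k] is the number of vertices strictly below the root [j] of the first tree. *)
Definition forests_step (E : 'I_m -> nat -> seq (seq (ctree m))) r n :=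
  flatten [seq flatten [seq [seq CNode j f :: ts | f <- E j k, ts <- E r (n - k)]
                       | j <- [seq j <- index_enum 'I_m | A r j]]
          | k <- iota 0 n.+1].

(* [N] is recursion fuel; it is irrelevant as soon as [n <= N]. *)
Fixpoint enum_forests (N : nat) (r : 'I_m) (n : nat) : seq (seq (ctree m)) :=
  if n is n'.+1 then
    if N is N'.+1 then forests_step (enum_forests N') r n' else [::]
  else [:: [::]].

Lemma enum_forests0 N r : enum_forests N r 0 = [:: [::]].
Proof. by case: N. Qed.

Lemma enum_forestsS N r n :
  enum_forests N.+1 r n.+1 = forests_step (enum_forests N) r n.
Proof. by []. Qed.

Lemma mem_enum_forests N r n ts :
  n <= N -> (ts \in enum_forests N r n) = Aforest r n ts.
Proof.
elim: N r n ts => [|N IHN] r [|n] ts le_nN; rewrite ?enum_forests0 ?inE ?Aforest0 //.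
rewrite enum_forestsS; apply/idP/idP.
- move=> /flatten_mapP[k]; rewrite mem_iota ltnS => /andP[_ le_kn].
  move=> /flatten_mapP[j]; rewrite mem_filter => /andP[Arj _].
  move=> /allpairsP[[f us] [/= f_in us_in ->]].
  rewrite IHN in f_in; last lia.
  rewrite IHN in us_in; last lia.
  by rewrite Aforest_cons Arj (Aforest_size f_in) f_in le_kn us_in.
- case: ts => [|[j f] us] //; rewrite Aforest_cons => /and4P[Arj f_ok le_fn us_ok].
  apply/flatten_mapP; exists (forest_size f); first by rewrite mem_iota ltnS.
  apply/flatten_mapP; exists j; first by rewrite mem_filter Arj mem_index_enum.
  by apply/allpairsP; exists (f, us); rewrite !IHN //; lia.
Qed.

Lemma enum_forests_uniq N r n : n <= N -> uniq (enum_forests N r n).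
Proof.
elim: N r n => [|N IHN] r [|n] le_nN; rewrite ?enum_forests0 // enum_forestsS.
apply: (@flatten_map_uniq _ _ _ (fun ts => omap (fun t => (csize t).-1) (ohead ts))).
- exact: iota_uniq.
- move=> k; rewrite mem_iota ltnS => /andP[_ le_kn].
  apply: (@flatten_map_uniq _ _ _ (fun ts => omap (@root_color m) (ohead ts))).
  + by rewrite filter_uniq ?index_enum_uniq.
  + move=> j _; apply: allpairs_uniq; rewrite ?IHN //; try lia.
    by move=> [f ts] [f' ts'] _ _ [-> ->].
  + by move=> j _ _ /allpairsP[[f ts] [_ _ ->]].
- move=> k; rewrite mem_iota ltnS => /andP[_ le_kn].
  move=> _ /flatten_mapP[j _] /allpairsP[[f ts] [/= f_in _ ->]].
  rewrite mem_enum_forests in f_in; last lia.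
  change (Some (csize (CNode j f)).-1 = Some k).
  by rewrite csize_CNode (Aforest_size f_in).
Qed.

Definition forest_count (r : 'I_m) (n : nat) : nat := size (enum_forests n r n).

Lemma size_enum_forests N r n : n <= N -> size (enum_forests N r n) = forest_count r n.
Proof.
move=> le_nN; apply/perm_size/uniq_perm; rewrite ?enum_forests_uniq //.
by move=> ts; rewrite !mem_enum_forests.
Qed.

Lemma forest_count0 r : forest_count r 0 = 1.
Proof. by []. Qed.

Lemma forest_countS r n :
  forest_count r n.+1 =
  \sum_(k < n.+1) (\sum_(j | A r j) forest_count j k) * forest_count r (n - k).
Proof.
rewrite {1}/forest_count enum_forestsS /forests_step.
rewrite size_flatten /shape -map_comp sumnE big_map.
rewrite -[iota 0 n.+1]/(index_iota 0 n.+1) big_mkord; apply: eq_bigr => k _.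
have le_kn : k <= n by rewrite -ltnS.
rewrite /= size_flatten /shape -map_comp sumnE big_map big_filter big_distrl.
by apply: eq_bigr => j _ /=; rewrite size_allpairs !size_enum_forests ?leq_subr.
Qed.

Lemma tA_forest_count i n : tA A i n.+1 = forest_count i n.
Proof.
have card_trees : has_card (fun t : ctree m =>
    [/\ csize t = n.+1, root_color t = i & Acolored A t]) (forest_count i n).
  rewrite /forest_count -(size_map (CNode i)).
  apply: has_card_seq => [|[c ts]].
    by rewrite map_inj_uniq ?enum_forests_uniq // => f g [].
  rewrite Acolored_CNode csize_CNode /=; split.
    by case=> [[<-] -> ts_ok]; rewrite map_f // mem_enum_forests.
  case/mapP=> f; rewrite mem_enum_forests // => f_ok [-> ->].
  by rewrite (Aforest_size f_ok).
exact: has_card_unique (epsilon_spec _ _ (ex_intro _ _ card_trees)) card_trees.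
Qed.

End Forests.

Lemma forest_count_eq m (A B : 'M[bool]_m) :
  (forall r k,
     \sum_(j | A r j) forest_count A j k = \sum_(j | B r j) forest_count A j k) ->
  forall r n, forest_count A r n = forest_count B r n.
Proof.
move=> row_sums r n; elim/ltn_ind: n r => -[|n] IHn r; first by rewrite !forest_count0.
rewrite !forest_countS; apply: eq_bigr => k _.
rewrite row_sums !IHn ?ltnS ?leq_subr //; congr (_ * _).
by apply: eq_bigr => j _; apply: IHn.
Qed.

Lemma switch_mx_row_sum m (A : 'M[bool]_m) (I J : {set 'I_m}) l (F : 'I_m -> nat) r :
  [disjoint I & J] -> {in I, forall i, A l i = false} -> {in J, forall j, A l j} ->
  \sum_(i in I) F i = \sum_(j in J) F j ->
  \sum_(j | A r j) F j = \sum_(j | switch_mx A I J l r j) F j.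
Proof.
move=> dIJ AlI AlJ sumIJ.
have [->|neq_rl] := eqVneq r l; last first.
  by apply: eq_bigl => j; rewrite mxE (negbTE neq_rl).
rewrite (bigID (mem (I :|: J))) [RHS](bigID (mem (I :|: J))) /=; congr (_ + _).
- rewrite (eq_bigl (fun j => j \in J)) => [|j]; last first.
    rewrite in_setU; have [jI|_] := boolP (j \in I).
      by rewrite AlI // (disjointFr dIJ jI).
    by have [/AlJ ->|_] := boolP (j \in J); rewrite ?andbF.
  rewrite -sumIJ; apply: eq_bigl => j; rewrite mxE eqxx in_setU.
  by case: (j \in I); case: (j \in J); rewrite /= ?andbF.
- apply: eq_bigl => j; rewrite mxE eqxx in_setU.
  by case: (j \in I); case: (j \in J); rewrite /= ?andbF.
Qed.

Theorem theorem15 (m : nat) (A : 'M[bool]_m) (I J : {set 'I_m}) (l : 'I_m) :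
  [disjoint I & J] ->
  #|I| = #|J| ->
  (forall n, (1 <= n)%N ->
     (\sum_(i in I) tA A i n = \sum_(j in J) tA A j n)%N) ->
  (forall i, i \in I -> A l i = false) ->
  (forall j, j \in J -> A l j = true) ->
  strictly_tree_coloring_equivalent A (switch_mx A I J l) /\
  (forall n, (1 <= n)%N ->
     [/\ (\sum_(i in I) tA A i n = \sum_(j in J) tA A j n)%N,
         (\sum_(j in J) tA A j n = \sum_(i in I) tA (switch_mx A I J l) i n)%N
       & (\sum_(i in I) tA (switch_mx A I J l) i n
          = \sum_(j in J) tA (switch_mx A I J l) j n)%N]).
Proof.
move=> dIJ _ sumIJ AlI AlJ.
have forest_sumIJ k : \sum_(i in I) forest_count A i k = \sum_(j in J) forest_count A j k.
  by rewrite -!(eq_bigr _ (fun i _ => tA_forest_count A i k)); apply: sumIJ.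
have equivAB : strictly_tree_coloring_equivalent A (switch_mx A I J l).
  move=> [|n] // _ i; rewrite !tA_forest_count.
  by apply: forest_count_eq => r k; apply: switch_mx_row_sum.
split=> // n n_gt0; rewrite -!(eq_bigr _ (fun i _ => equivAB n n_gt0 i)).
by rewrite sumIJ.
Qed.
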